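(* Let $G,G'$ be groups, $Q$ a non-empty set, $\alpha\in[0,1]$, and $f:G\to G'$ an anti-homomorphism. Let $\theta$ be a $Q$-fuzzy subset of $G$ such that $\theta^\alpha$ is an $\alpha$-$Q$-fuzzy subgroup of $G$. Then the image $f(\theta^\alpha)$ is an $\alpha$-$Q$-fuzzy subgroup of $G'$, in the sense that $f(\theta^\alpha)(ab,q)\ge\min\{f(\theta^\alpha)(a,q),f(\theta^\alpha)(b,q)\}$ and $f(\theta^\alpha)(a^{-1},q)\ge f(\theta^\alpha)(a,q)$ for all $a,b\in G'$, $q\in Q$.
   Context: A map $f:G\to G'$ between groups is an anti-homomorphism if $f(xy)=f(y)f(x)$ for all $x,y\in G$. A $Q$-fuzzy subset of a group $H$ is a map $H\times Q\to[0,1]$. For $\alpha\in[0,1]$, $\theta^\alpha(x,q)=\min\{\theta(x,q),\alpha\}$. $\theta^\alpha$ is called an $\alpha$-$Q$-fuzzy subgroup of $G$ if $\theta^\alpha(xy,q)\ge\min\{\theta^\alpha(x,q),\theta^\alpha(y,q)\}$ and $\theta^\alpha(x^{-1},q)\ge\theta^\alpha(x,q)$ for all $x,y\in G$, $q\in Q$. The image of a $Q$-fuzzy subset $\mu$ of $G$ is $f(\mu)(x',q)=\sup\{\mu(x,q): x\in G,\ f(x)=x'\}$ (with $\sup\emptyset=0$). *)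

From HB Require Import structures.
From mathcomp Require Import all_boot all_order all_algebra.
From mathcomp Require Import all_classical all_reals.
Set Implicit Arguments. Unset Strict Implicit. Unset Printing Implicit Defensive.
Import Order.TTheory GRing.Theory Num.Theory.
Local Open Scope classical_set_scope.
Local Open Scope ring_scope.

Definition anti_hom (G G' : groupType) (f : G -> G') : Prop :=
  forall x y : G, f (x * y)%g = (f y * f x)%g.

(* a Q-fuzzy subset of H is a map H -> Q -> [0,1] ; we use R-valued maps plus
   an explicit range hypothesis *)
Definition QFuzzy_range (R : realType) (H Q : Type) (mu : H -> Q -> R) : Prop :=
  forall x q, 0 <= mu x q <= 1.

Definition alpha_cut (R : realType) (H Q : Type) (theta : H -> Q -> R) (alpha : R)
  : H -> Q -> R := fun x q => Num.min (theta x q) alpha.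

Definition is_fuzzy_subgroup_cond (R : realType) (G : groupType) (Q : Type)
  (mu : G -> Q -> R) : Prop :=
  (forall (x y : G) (q : Q), mu (x * y)%g q >= Num.min (mu x q) (mu y q)) /\
  (forall (x : G) (q : Q), mu (x^-1)%g q >= mu x q).

(* image f(mu)(x',q) = sup { mu(x,q) | f x = x' }, with sup of empty set = 0
   (MathComp-Analysis' [sup] satisfies sup set0 = 0). *)
Definition fuzzy_image (R : realType) (G G' : Type) (Q : Type) (f : G -> G')
  (mu : G -> Q -> R) : G' -> Q -> R :=
  fun x' q => sup [set mu x q | x in [set x | f x = x']].

(** If a
    value [c] lies strictly below the images at [a] and [b], pick [x], [y] in
    the fibres with [c < mu x] and [c < mu y]; since [f] reverses products,
    [y * x] lies in the fibre of [a * b] and [mu (y * x) >= min (mu y) (mu x) > c],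
    so [c] is not an upper bound of that fibre either. Inverses are handled
    the same way, using [f x^-1 = (f x)^-1]. *)

From HB Require Import structures.
From mathcomp Require Import all_boot all_order all_algebra.
From mathcomp Require Import all_classical all_reals.
Import Order.TTheory GRing.Theory Num.Theory.
Local Open Scope ring_scope.
Local Open Scope classical_set_scope.

Section AntiHomomorphism.
Variables (G G' : groupType) (f : G -> G').
Hypothesis hf : anti_hom f.

Lemma anti_hom1 : f 1%g = 1%g.
Proof. by apply: (mulgI (f 1%g)); rewrite mulg1 -hf mulg1. Qed.

Lemma anti_homV x : f x^-1%g = (f x)^-1%g.
Proof. by apply/esym/mulg1_eq; rewrite -hf mulVg anti_hom1. Qed.

End AntiHomomorphism.

Lemma alpha_cut_range {R : realType} {H Q : Type} {theta : H -> Q -> R}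
    {alpha : R} :
  0 <= alpha -> QFuzzy_range theta -> QFuzzy_range (alpha_cut theta alpha).
Proof.
move=> alpha_ge0 htheta x q; have /andP[theta_ge0 theta_le1] := htheta x q.
by rewrite /alpha_cut le_min theta_ge0 alpha_ge0 ge_min theta_le1.
Qed.

Section FuzzyImage.
Set Implicit Arguments. Unset Strict Implicit.
Variables (R : realType) (G G' Q : Type) (f : G -> G') (mu : G -> Q -> R).
Hypothesis mu_range : QFuzzy_range mu.

Let fibre_values x' q := [set mu x q | x in [set x | f x = x']].

Let fibre_values_ub x' q : has_ubound (fibre_values x' q).
Proof. by exists 1 => _ [x _ <-]; case/andP: (mu_range x q). Qed.

Lemma fuzzy_image_no_preimage x' q :
  ~ (exists x, f x = x') -> fuzzy_image f mu x' q = 0.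
Proof.
move=> no_preimage; rewrite /fuzzy_image -[X in sup X]/(fibre_values x' q).
suff -> : fibre_values x' q = set0 by rewrite sup0.
by apply/seteqP; split=> // y [x fx _]; apply: no_preimage; exists x.
Qed.

Lemma le_fuzzy_image x q : mu x q <= fuzzy_image f mu (f x) q.
Proof. by apply: ub_le_sup; [exact: fibre_values_ub | exists x]. Qed.

Lemma fuzzy_image_ge0 x' q : 0 <= fuzzy_image f mu x' q.
Proof.
have [[x <-]|no_preimage] := pselect (exists x, f x = x').
  by apply: le_trans (le_fuzzy_image x q); case/andP: (mu_range x q).
by rewrite fuzzy_image_no_preimage.
Qed.

Lemma fuzzy_image_gtP x' q c : 0 <= c -> c < fuzzy_image f mu x' q ->
  exists2 x, f x = x' & c < mu x q.
Proof.
move=> c_ge0 c_lt; have [[x fx]|no_preimage] := pselect (exists x, f x = x').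
  have fibre_n0 : fibre_values x' q !=set0 by exists (mu x q), x.
  by have [_ [y fy <-] c_lt_y] := sup_gt fibre_n0 c_lt; exists y.
by move: c_lt; rewrite fuzzy_image_no_preimage // ltNge c_ge0.
Qed.

End FuzzyImage.

Lemma fuzzy_image_subgroup {R : realType} {G G' : groupType} {Q : Type}
    {f : G -> G'} {mu : G -> Q -> R} :
  anti_hom f -> QFuzzy_range mu -> is_fuzzy_subgroup_cond mu ->
  is_fuzzy_subgroup_cond (fuzzy_image f mu).
Proof.
move=> hf mu_range [mu_mul mu_inv]; split.
- move=> a b q; rewrite leNgt; apply/negP; rewrite lt_min => /andP[lt_a lt_b].
  have c_ge0 := fuzzy_image_ge0 f mu_range (a * b)%g q.
  have [x fx lt_x] := fuzzy_image_gtP c_ge0 lt_a.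
  have [y fy lt_y] := fuzzy_image_gtP c_ge0 lt_b.
  have := le_trans (mu_mul y x q) (le_fuzzy_image f mu_range (y * x)%g q).
  by rewrite hf fx fy leNgt lt_min lt_y lt_x.
- move=> a q; rewrite leNgt; apply/negP => lt_a.
  have c_ge0 := fuzzy_image_ge0 f mu_range a^-1%g q.
  have [x fx lt_x] := fuzzy_image_gtP c_ge0 lt_a.
  have := le_trans (mu_inv x q) (le_fuzzy_image f mu_range x^-1%g q).
  by rewrite anti_homV // fx leNgt lt_x.
Qed.

Theorem proposition5p2 (R : realType) (G G' : groupType) (Q : Type)
  (Qne : inhabited Q) (alpha : R) (halpha : 0 <= alpha <= 1)
  (f : G -> G') (hf : anti_hom f)
  (theta : G -> Q -> R) (htheta : QFuzzy_range theta)
  (hsub : is_fuzzy_subgroup_cond (alpha_cut theta alpha)) :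
  is_fuzzy_subgroup_cond (fuzzy_image f (alpha_cut theta alpha)).
Proof.
case/andP: halpha => alpha_ge0 _.
exact: fuzzy_image_subgroup hf (alpha_cut_range alpha_ge0 htheta) hsub.
Qed.
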